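(* Let $n\ge1$, let $a=x_0<x_1<\dots<x_n=b$ be a partition of $[a,b]$, and let $Z$ be the $(n+1)\times(n+1)$ matrix with entries $Z_{jk}=l_k'(x_j)$, where $l_k$ are the Lagrange basis polynomials of the partition. Let $P(z)=a_kz^k+a_{k+1}z^{k+1}+\dots+a_mz^m$ be a real polynomial with $0\le k\le n$, $k\le m$ and $a_k\ne0$. Then $\operatorname{rank} Z=n$, $Z^{n+1}=0$, and $\operatorname{rank} P(Z)=\operatorname{rank} Z^k=n+1-k$.
   Context: $l_k(x)=\prod_{m\ne k}(x-x_m)/\prod_{m\ne k}(x_k-x_m)$ for $k=0,\dots,n$. The matrix $Z$ is the finite dimensional (Lie-algebraic) representation of $d/dx$, so $P(Z)$ represents the operator $a_k\frac{d^k}{dx^k}+\dots+a_m\frac{d^m}{dx^m}$. *)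

From HB Require Import structures.
From mathcomp Require Import all_boot all_order all_algebra.
Set Implicit Arguments. Unset Strict Implicit. Unset Printing Implicit Defensive.
Import Order.TTheory GRing.Theory Num.Theory.
Local Open Scope ring_scope.

Definition lagrange_basis (R : fieldType) (n : nat) (x : 'I_n.+1 -> R)
  (k : 'I_n.+1) : {poly R} :=
  (\prod_(m < n.+1 | m != k) (x k - x m))^-1 *:
    \prod_(m < n.+1 | m != k) ('X - (x m)%:P).

Definition diff_matrix (R : fieldType) (n : nat) (x : 'I_n.+1 -> R)
  : 'M[R]_n.+1 :=
  \matrix_(j < n.+1, k < n.+1) ((lagrange_basis x k)^`()).[x j].

From HB Require Import structures.
From mathcomp Require Import all_boot all_order all_algebra.
From mathcomp Require Import perm.
Set Implicit Arguments. Unset Strict Implicit. Unset Printing Implicit Defensive.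
Import Order.TTheory GRing.Theory Num.Theory.
Local Open Scope ring_scope.

(* By Lagrange interpolation, Z maps the vector of node values of a polynomial
   of degree at most n to the node values of its derivative.  Conjugating by
   the Vandermonde matrix therefore turns Z^k into the matrix of d^k/dX^k in
   the monomial basis, which is the k-th shift matrix rescaled by nonzero
   falling factorials (characteristic 0); its rank is n+1-k.  In particular Z
   is nilpotent, and P(Z) = Z^k Q(Z) with Q(0) <> 0 makes Q(Z) a unit plus a
   nilpotent, hence invertible. *)

Lemma unitmx1B_nilpotent (R : comUnitRingType) n (N : 'M[R]_n) m :
  N ^+ m = 0 -> 1 - N \in unitmx.
Proof.
move=> Nm0; apply: (proj1 (@mulmx1_unit _ _ _ (\sum_(i < m) N ^+ i) _)).
by rewrite mulmxE -opprB mulNr -subrX1 Nm0 sub0r opprK.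
Qed.

Lemma take_poly_eq0 (R : nzRingType) (p : {poly R}) k :
  (forall i, (i < k)%N -> p`_i = 0) -> take_poly k p = 0.
Proof.
move=> p_low; apply/polyP => i.
by rewrite coef_take_poly coef0; case: ltnP => // /p_low.
Qed.

Section NilpotentMatrix.
Variables (R : fieldType) (n : nat) (A : 'M[R]_n.+1) (m : nat).
Hypothesis A_nil : A ^+ m = 0.

Lemma horner_mx_nilpotent_unit (Q : {poly R}) :
  Q`_0 != 0 -> horner_mx A Q \in unitmx.
Proof.
move=> Q0; set c := Q`_0; set y := - c^-1 *: (drop_poly 1 Q * 'X).
have defQ : Q = c *: (1 - y).
  rewrite /y scalerBr scaleNr scalerN opprK scalerA mulfV // scale1r alg_polyC.
  rewrite -[Q in LHS](poly_take_drop 1); congr (_ + _).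
  by apply/polyP => i; rewrite coef_take_poly coefC; case: i.
rewrite defQ linearZ /= unitmxZ ?unitfE // rmorphB rmorph1.
apply: (unitmx1B_nilpotent (m := m)).
rewrite -rmorphXn /y exprZn exprMn.
have AXm : horner_mx A 'X^m = 0 by rewrite rmorphXn /= horner_mx_X.
by rewrite -mul_polyC !rmorphM /= AXm !mulr0.
Qed.

Lemma mxrank_horner_mx_nilpotent k (P : {poly R}) :
  (forall i, (i < k)%N -> P`_i = 0) -> P`_k != 0 ->
  \rank (horner_mx A P) = \rank (A ^+ k).
Proof.
move=> P_low Pk; rewrite -(poly_take_drop k P) take_poly_eq0 // add0r mulrC.
rewrite rmorphM rmorphXn /= horner_mx_X -mulmxE mxrankMfree // row_free_unit.
by rewrite horner_mx_nilpotent_unit // coef_drop_poly.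
Qed.

End NilpotentMatrix.

Section ShiftMatrix.
Variables (R : fieldType) (n : nat).

Definition shift_mx (k : nat) : 'M[R]_n.+1 :=
  \matrix_(l, i) (i == (l + k)%N :> nat)%:R.

Lemma mxrank_shift_mx k : \rank (shift_mx k) = (n.+1 - k)%N.
Proof.
have rot_inj :
    injective (fun l : 'I_n.+1 => Ordinal (ltn_pmod (l + k) (ltn0Sn n))).
  move=> l l' /(congr1 val) /= /eqP; rewrite eqn_modDr !modn_small // => /eqP.
  exact: val_inj.
set t := perm rot_inj; set r := (n.+1 - k)%N.
have -> : shift_mx k = col_perm t^-1%g (pid_mx r).
  apply/matrixP => l i; rewrite !mxE.
  have -> : (l == t^-1%g i :> nat) = (t l == i).
    by rewrite val_eqE eq_sym (canF_eq (permKV t)) eq_sym.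
  rewrite permE -val_eqE /= eq_sym.
  have [lr | rl] := ltnP l r.
    by rewrite andbT modn_small // addnC -ltn_subRL.
  rewrite andbF; case: eqP => // kl_i; move: (ltn_ord i).
  by rewrite -kl_i addnC -ltn_subRL ltnNge rl.
rewrite col_permE mxrankMfree ?row_free_unit ?unitmx_perm //.
by rewrite rank_pid_mx ?leq_subr.
Qed.

End ShiftMatrix.

(* Entry (l, i) is the coefficient of 'X^l in ('X^i)^`(k). *)
Definition derivn_mx (R : pzRingType) n k : 'M[R]_n :=
  \matrix_(l, i) ((i == (l + k)%N :> nat)%:R *+ i ^_ k).

Lemma derivn_mx_diag (R : fieldType) n k :
  derivn_mx R n.+1 k = diag_mx (\row_l ((l + k) ^_ k)%N%:R) *m shift_mx R n k.
Proof.
apply/matrixP => l i; rewrite mul_diag_mx !mxE.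
have [-> | _] := eqVneq (i : nat) (l + k)%N; first by rewrite mulr1n mulr1.
by rewrite mul0rn mulr0.
Qed.

Lemma mxrank_derivn_mx (R : numFieldType) n k :
  \rank (derivn_mx R n.+1 k) = (n.+1 - k)%N.
Proof.
rewrite derivn_mx_diag eqmxMfull ?mxrank_shift_mx // row_full_unit unitmxE.
rewrite det_diag unitfE; apply/prodf_neq0 => l _.
by rewrite !mxE pnatr_eq0 -lt0n ffact_gt0 leq_addl.
Qed.

Section Nodes.
Variables (R : fieldType) (n : nat) (x : 'I_n.+1 -> R).
Hypothesis x_inj : injective x.

Lemma horner_lagrange_basis k j : (lagrange_basis x k).[x j] = (j == k)%:R.
Proof.
rewrite hornerZ horner_prod; under eq_bigr do rewrite hornerXsubC.
have [-> | neq_jk] := eqVneq j k.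
  rewrite mulVf //; apply/prodf_neq0 => m neq_mk.
  by rewrite subr_eq0 (inj_eq x_inj) eq_sym.
by rewrite [X in _ * X](bigD1 j) //= subrr mul0r mulr0.
Qed.

Lemma size_lagrange_basis k : (size (lagrange_basis x k) <= n.+1)%N.
Proof.
rewrite (leq_trans (size_scale_leq _ _)) // -big_filter size_prod_XsubC ltnS.
by rewrite size_filter -sum1_count sum1_card cardC1 card_ord.
Qed.

Lemma lagrange_interpolation (p : {poly R}) : (size p <= n.+1)%N ->
  p = \sum_k p.[x k] *: lagrange_basis x k.
Proof.
move=> size_p; apply/eqP; rewrite -subr_eq0; apply/eqP.
apply: (@roots_geq_poly_eq0 _ _ [seq x j | j <- enum 'I_n.+1]).
- apply/allP => _ /mapP [j _ ->]; rewrite /root hornerD hornerN horner_sum.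
  rewrite (bigD1 j) //= big1 => [|k neq_kj];
    rewrite hornerZ horner_lagrange_basis.
    by rewrite eqxx mulr1 addr0 subrr.
  by rewrite eq_sym (negPf neq_kj) mulr0.
- by rewrite map_inj_uniq ?enum_uniq.
rewrite size_map size_enum_ord (leq_trans (size_polyD _ _)) // geq_max size_p.
rewrite size_polyN (leq_trans (size_sum _ _ _)) //; apply/bigmax_leqP => k _.
exact: leq_trans (size_scale_leq _ _) (size_lagrange_basis k).
Qed.

Definition node_values (p : {poly R}) : 'cV[R]_n.+1 := \col_j p.[x j].

Lemma diff_matrix_node_values (p : {poly R}) : (size p <= n.+1)%N ->
  diff_matrix x *m node_values p = node_values p^`().
Proof.
move=> size_p; apply/matrixP => j i; rewrite !mxE.
rewrite [in RHS](lagrange_interpolation size_p) linear_sum horner_sum.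
by apply: eq_bigr => k _; rewrite !mxE [in RHS]linearZ hornerZ mulrC.
Qed.

Lemma diff_matrixX_node_values k (p : {poly R}) : (size p <= n.+1)%N ->
  diff_matrix x ^+ k *m node_values p = node_values p^`(k).
Proof.
elim: k p => [|k IHk] p size_p; first by rewrite mul1mx.
rewrite exprSr -mulmxE -mulmxA diff_matrix_node_values // IHk -?derivSn //.
exact: leq_trans (size_poly _ _) (leq_trans (leq_pred _) size_p).
Qed.

(* Column i lists the values of 'X^i at the nodes. *)
Definition monomial_values : 'M[R]_n.+1 := (Vandermonde n.+1 (\row_j x j))^T.

Lemma monomial_values_unit : monomial_values \in unitmx.
Proof.
rewrite unitmx_tr unitmxE det_Vandermonde unitfE; apply/prodf_neq0 => i _.
apply/prodf_neq0 => j lt_ij; rewrite !mxE subr_eq0 (inj_eq x_inj).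
by rewrite -val_eqE neq_ltn lt_ij orbT.
Qed.

Lemma diff_matrixX_monomial_values k :
  diff_matrix x ^+ k *m monomial_values = monomial_values *m derivn_mx R n.+1 k.
Proof.
apply/matrixP => j i.
have -> : (diff_matrix x ^+ k *m monomial_values) j i =
          (diff_matrix x ^+ k *m node_values 'X^i) j 0.
  by rewrite !mxE; apply: eq_bigr => l _; rewrite !mxE hornerXn.
rewrite diff_matrixX_node_values ?size_polyXn // derivnXn !mxE.
rewrite hornerMn hornerXn.
have [le_ki | lt_ik] := leqP k i; last first.
  rewrite ffact_small // mulr0n big1 // => l _.
  by rewrite !mxE ffact_small // !mulr0n mulr0.
have lt_ik_n : (i - k < n.+1)%N by rewrite (leq_ltn_trans (leq_subr _ _)).
rewrite (bigD1 (Ordinal lt_ik_n)) //= big1 ?addr0 => [|l neq_l].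
  by rewrite !mxE /= subnK // eqxx mulr1n mulrnAr mulr1.
rewrite !mxE; case: eqP => [eq_il | _]; last by rewrite mul0rn mulr0.
by case/eqP: neq_l; apply/val_inj; rewrite /= eq_il addnK.
Qed.

End Nodes.

Lemma mxrank_diff_matrixX (R : numFieldType) n (x : 'I_n.+1 -> R) k :
  injective x -> \rank (diff_matrix x ^+ k) = (n.+1 - k)%N.
Proof.
move=> x_inj; have V_unit := monomial_values_unit x_inj.
rewrite -[LHS](mxrankMfree _ (B := monomial_values x)) ?row_free_unit //.
rewrite diff_matrixX_monomial_values // eqmxMfull ?row_full_unit //.
exact: mxrank_derivn_mx.
Qed.

Theorem theorem3 (R : realFieldType) (n : nat) (a b : R)
  (x : 'I_n.+1 -> R) (k : nat) (P : {poly R}) :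
  (1 <= n)%N ->
  x ord0 = a -> x ord_max = b ->
  (forall i j : 'I_n.+1, (i < j)%N -> x i < x j) ->
  (k <= n)%N ->
  (forall i, (i < k)%N -> P`_i = 0) ->
  P`_k != 0 ->
  let Z := diff_matrix x in
  \rank Z = n /\ Z ^+ n.+1 = 0 /\
  \rank (horner_mx Z P) = \rank (Z ^+ k) /\ \rank (Z ^+ k) = (n.+1 - k)%N.
Proof.
move=> _ _ _ x_lt _ P_low Pk Z.
have x_inj : injective x := inc_inj (le_mono x_lt).
have rankZX j : \rank (Z ^+ j) = (n.+1 - j)%N := mxrank_diff_matrixX j x_inj.
have Z_nil : Z ^+ n.+1 = 0 by apply/eqP; rewrite -mxrank_eq0 rankZX subnn.
split; first by rewrite -[Z]expr1 rankZX subn1.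
split=> //; split; last exact: rankZX.
by rewrite (mxrank_horner_mx_nilpotent Z_nil P_low Pk).
Qed.
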